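(* Let $R=\mathrm{Mat}_n(\mathcal O_D,\underline m)\subset\mathrm{Mat}_n(D)$ be a standard monomial order of level $\underline m=(m_{ij})$ with $m_{1i}=0$ for all $i=1,\dots,n$. Let $l_1,\dots,l_n\in\mathbb Z$ and let $M=[\mathfrak P^{l_1},\dots,\mathfrak P^{l_n}]^t=\{[x_1,\dots,x_n]^t: x_i\in\mathfrak P^{l_i}\}\subset D^n$ be a left $R$-submodule of $D^n$ (where $R$ acts on column vectors by matrix multiplication). Then $M$ is a projective left $R$-module if and only if $M$ is, up to a scalar in $D$, a column of $R$; that is, if and only if there exist $1\le j\le n$ and $c\in\mathbb Z$ such that $l_i=m_{ij}+c$ for all $1\le i\le n$.
   Context: Let $k$ be a non-Archimedean local field with ring of integers $\mathcal O$, let $D$ be a finite-dimensional central division algebra over $k$, $\mathcal O_D$ its valuation ring, $\mathfrak P$ its maximal ideal. For $\underline m=(m_{ij})\in\mathrm{Mat}_n(\mathbb Z)$ with $m_{ii}=0$ and $m_{ik}\le m_{ij}+m_{jk}$ for all $i,j,k$, the standard monomial order of level $\underline m$ is $\mathrm{Mat}_n(\mathcal O_D,\underline m)=\{(a_{ij})\in\mathrm{Mat}_n(D): a_{ij}\in\mathfrak P^{m_{ij}}\ \forall i,j\}$. $D^n$ denotes column vectors, a right $D$-vector space and left $\mathrm{Mat}_n(D)$-module. *)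

From HB Require Import structures.
From mathcomp Require Import all_boot all_order all_algebra.
Set Implicit Arguments. Unset Strict Implicit. Unset Printing Implicit Defensive.
Import Order.TTheory GRing.Theory Num.Theory.
Local Open Scope ring_scope.

(* [inPow v m x] : x lies in P^m, where P = {x : v x >= 1} is the maximal
   ideal of the valuation ring O_D = {x : v x >= 0}; x = 0 always lies in P^m.
   (v is only meaningful on nonzero elements.) *)
Definition inPow (D : nzRingType) (v : D -> int) (m : int) (x : D) : bool :=
  (x == 0) || (m <= v x).

Definition division_ring (D : unitRingType) : Prop :=
  forall x : D, x != 0 -> x \is a GRing.unit.

Definition normalized_discrete_valuation (D : nzRingType) (v : D -> int) : Prop :=
  [/\ forall x y : D, x != 0 -> y != 0 -> v (x * y) = v x + v y,
      forall x y : D, x != 0 -> y != 0 -> x + y != 0 ->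
        Num.min (v x) (v y) <= v (x + y)
    & exists pi : D, pi != 0 /\ v pi = 1].

(* The valuation of k is the restriction w = v \o f. *)
Definition local_central_division_algebra
    (k : fieldType) (D : unitRingType) (f : {rmorphism k -> D}) (v : D -> int)
    : Prop :=
  division_ring D /\
  normalized_discrete_valuation v /\
      (forall x : D, (forall y : D, x * y = y * x) <-> exists a : k, x = f a) /\
      (exists (d : nat) (e : 'I_d -> D), forall x : D,
          exists c : 'I_d -> k, x = \sum_(i < d) f (c i) * e i) /\
      (exists a : k, f a != 0 /\ v (f a) != 0) /\
      (* the residue field of k is finite *)
      (exists s : seq k, forall a : k, inPow v 0 (f a) ->
          exists2 t, t \in s & inPow v 1 (f (a - t))) /\
      (* k is complete *)
      (forall a : nat -> k,
          (forall N : int, exists M : nat, forall p q : nat,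
              (M <= p)%N -> (M <= q)%N -> inPow v N (f (a p - a q))) ->
          exists l : k, forall N : int, exists M : nat, forall p : nat,
              (M <= p)%N -> inPow v N (f (a p - l))).

Definition is_level (n : nat) (m : 'I_n -> 'I_n -> int) : Prop :=
  (forall i, m i i = 0) /\ (forall i j l, m i l <= m i j + m j l).

Definition monomial_order (D : nzRingType) (v : D -> int) (n : nat)
    (m : 'I_n -> 'I_n -> int) : pred 'M[D]_n :=
  fun A => [forall i, [forall j, inPow v (m i j) (A i j)]].

Definition diag_lattice (D : nzRingType) (v : D -> int) (n : nat)
    (l : 'I_n -> int) : pred 'cV[D]_n :=
  fun x => [forall i, inPow v (l i) (x i ord0)].

Definition is_left_submodule (D : nzRingType) (n : nat)
    (R : pred 'M[D]_n) (M : pred 'cV[D]_n) : Prop :=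
  [/\ (0 : 'cV[D]_n) \in M,
      (forall x y, x \in M -> y \in M -> x + y \in M)
    & (forall r x, r \in R -> x \in M -> r *m x \in M)].

(* M is a projective left R-module: M is (isomorphic to) a direct summand of
   a free left R-module R^k, i.e. there are R-linear maps s : M -> R^k and
   p : R^k -> M with p \o s = id_M.  Elements of R^k are k-tuples
   (functions 'I_k -> 'M_n) of elements of R, with R acting by left
   multiplication componentwise. *)
Definition is_projective (D : nzRingType) (n : nat)
    (R : pred 'M[D]_n) (M : pred 'cV[D]_n) : Prop :=
  exists (k : nat) (p : ('I_k -> 'M[D]_n) -> 'cV[D]_n)
         (s : 'cV[D]_n -> ('I_k -> 'M[D]_n)),
    (forall y, (forall i, y i \in R) -> p y \in M) /\
        (forall y z, (forall i, y i \in R) -> (forall i, z i \in R) ->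
           p (fun i => y i + z i) = p y + p z) /\
        (forall r y, r \in R -> (forall i, y i \in R) ->
           p (fun i => r * y i) = r *m p y) /\
        (forall x, x \in M -> forall i, s x i \in R) /\
        (forall x y, x \in M -> y \in M -> s (x + y) = (fun i => s x i + s y i)) /\
        (forall r x, r \in R -> x \in M -> s (r *m x) = (fun i => r * s x i)) /\
      (forall x, x \in M -> p (s x) = x).

From HB Require Import structures.
From mathcomp Require Import all_boot all_order all_algebra.
From mathcomp Require Import zify.
From Stdlib Require Import FunctionalExtensionality.
Import Order.TTheory GRing.Theory Num.Theory.
Local Open Scope ring_scope.
Set Implicit Arguments. Unset Strict Implicit.

(* By the dual basis lemma, a projective M has R-linear coordinates
   s_t : M -> R and generators z_t in M with x = sum_t s_t(x) z_t.  For
   x0 = pi^(l_1) e_1, the ultrametric inequality yields t, j with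
   v(s_t(x0)_1j) + v((z_t)_j) <= l_1.  Applying s_t to
   E_1i (pi^(l_i) e_i) = E_11(pi^(l_i - l_1)) x0 gives
   v(s_t(x0)_1j) >= m_ij + l_1 - l_i, and z_t in M gives v((z_t)_j) >= l_j,
   so l_i >= m_ij + l_j; the reverse inequality holds for every R-submodule.
   Conversely, if l_i = m_ij + c, then x |-> x pi^(-c) e_j^T and
   y |-> y pi^c e_j exhibit M as a direct summand of R. *)

Section DualBasis.
Variables (D : nzRingType) (N : nat) (R : pred 'M[D]_N) (M : pred 'cV[D]_N).
Hypotheses (R0 : 0 \in R) (R1 : 1 \in R)
  (RD : forall A B, A \in R -> B \in R -> A + B \in R).

Lemma sum_closed_in (I : Type) (r : seq I) (F : I -> 'M[D]_N) :
  (forall t, F t \in R) -> \sum_(t <- r) F t \in R.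
Proof. by move=> FR; apply: (big_ind (fun A => A \in R)) => // t _; apply: FR. Qed.

Lemma projective_dual_basis : is_projective R M ->
  exists k (s : 'cV[D]_N -> 'I_k -> 'M[D]_N) (z : 'I_k -> 'cV[D]_N),
  [/\ forall x t, x \in M -> s x t \in R,
      forall r x t, r \in R -> x \in M -> s (r *m x) t = r * s x t,
      forall t, z t \in M
    & forall x, x \in M -> x = \sum_(t < k) s x t *m z t].
Proof.
move=> [k [p [s [pM [pD [pZ [sR [_ [sZ ps]]]]]]]]].
pose basis t : 'I_k -> 'M[D]_N := fun i => if i == t then 1 else 0.
have basisR t i : basis t i \in R by rewrite /basis; case: eqP.
exists k, s, (fun t => p (basis t)); split=> // [x t xM | r x t rR xM | t | x xM].
- exact: sR.
- by rewrite sZ.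
- exact: pM.
have p0 : p (fun _ => 0) = 0.
  apply: (addrI (p (fun _ => 0))); rewrite addr0 -pD //.
  by congr p; apply: functional_extensionality => i; rewrite addr0.
have p_sum (F : 'I_k -> 'I_k -> 'M[D]_N) : (forall t i, F t i \in R) ->
    p (fun i => \sum_(t < k) F t i) = \sum_(t < k) p (F t).
  move=> FR; elim: (index_enum _) => [|t r IH].
    by rewrite big_nil -p0; congr p; apply: functional_extensionality => i; rewrite big_nil.
  rewrite big_cons -IH -pD // => [|i]; last exact: sum_closed_in.
  by congr p; apply: functional_extensionality => i; rewrite big_cons.
have sx_sum : s x = fun i => \sum_(t < k) s x t * basis t i.
  apply: functional_extensionality => i; rewrite (bigD1 i) //= big1 => [|t ti].
    by rewrite /basis eqxx mulr1 addr0.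
  by rewrite /basis eq_sym (negbTE ti) mulr0.
rewrite -{1}(ps x xM) {1}sx_sum p_sum.
  by apply: eq_bigr => t _; apply: pZ (sR _ xM t) (basisR t).
by move=> t i; rewrite /basis; case: eqP; rewrite ?mulr1 ?mulr0 // => _; apply: sR.
Qed.

End DualBasis.

Section ElementaryMatrices.
Variables (D : pzRingType) (N : nat).

Definition elem_mx (i j : 'I_N) (a : D) : 'M[D]_N :=
  \matrix_(r, c) (if (r == i) && (c == j) then a else 0).
Definition elem_col (i : 'I_N) (a : D) : 'cV[D]_N := \col_r (if r == i then a else 0).
Definition elem_row (j : 'I_N) (a : D) : 'rV[D]_N := \row_c (if c == j then a else 0).

Lemma sum_if_eq (F : 'I_N -> D) j : \sum_(i < N) (if i == j then F i else 0) = F j.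
Proof. by rewrite -big_mkcond big_pred1_eq. Qed.

Lemma elem_mxM q i j a (A : 'M[D]_(N, q)) r c :
  (elem_mx i j a *m A) r c = if r == i then a * A j c else 0.
Proof.
rewrite mxE; have [-> | ri] := eqVneq r i; last first.
  by rewrite big1 // => t _; rewrite mxE (negbTE ri) mul0r.
rewrite -(sum_if_eq (fun t => a * A t c)); apply: eq_bigr => t _.
by rewrite mxE eqxx /=; case: eqP; rewrite ?mul0r.
Qed.

Lemma mulmx_elem_col q (A : 'M[D]_(q, N)) j a r c : (A *m elem_col j a) r c = A r j * a.
Proof.
rewrite mxE -(sum_if_eq (fun t => A r t * a)).
by apply: eq_bigr => t _; rewrite mxE; case: eqP; rewrite ?mulr0.
Qed.

Lemma mul_col_elem_row (x : 'cV[D]_N) j a r c :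
  (x *m elem_row j a) r c = if c == j then x r 0 * a else 0.
Proof. by rewrite mxE big_ord1 mxE; case: eqP; rewrite ?mulr0. Qed.

Lemma elem_mx_col i j a b : elem_mx i j a *m elem_col j b = elem_col i (a * b).
Proof. by apply/matrixP => r c; rewrite elem_mxM !mxE eqxx; case: eqP. Qed.

Lemma elem_row_col j a b : elem_row j a *m elem_col j b = (a * b)%:M.
Proof.
apply/matrixP => r c; rewrite !ord1 !mxE /= -(sum_if_eq (fun _ => a * b) j).
by apply: eq_bigr => t _; rewrite !mxE; case: eqP; rewrite ?mul0r.
Qed.

End ElementaryMatrices.

Lemma unitr_neq0 (D : unitRingType) (x : D) : x \is a GRing.unit -> x != 0.
Proof. by apply: contraTneq => ->; rewrite unitr0. Qed.

Section ValuedDivisionRing.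
Variables (D : unitRingType) (v : D -> int).
Hypothesis D_div : division_ring D.
Hypothesis valM : forall x y : D, x != 0 -> y != 0 -> v (x * y) = v x + v y.
Hypothesis val_add : forall x y : D, x != 0 -> y != 0 -> x + y != 0 ->
  Num.min (v x) (v y) <= v (x + y).
Variable pi : D.
Hypotheses (pi_neq0 : pi != 0) (val_pi : v pi = 1).

Lemma mulr_neq0 (x y : D) : x != 0 -> y != 0 -> x * y != 0.
Proof.
by move=> x0 y0; apply: contraNneq y0 => xy0; rewrite -(mulKr (D_div x0) y) xy0 mulr0.
Qed.

Lemma val1 : v 1 = 0.
Proof. by apply: (addrI (v 1)); rewrite addr0 -valM ?mulr1 ?oner_neq0. Qed.

Lemma valV x : x != 0 -> v x^-1 = - v x.
Proof.
move=> x0; have xV0 : x^-1 != 0 by apply/unitr_neq0; rewrite unitrV D_div.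
by apply: (addrI (v x)); rewrite -valM // divrr ?D_div // val1 subrr.
Qed.

Lemma unitr_exprz (z : int) : pi ^ z \is a GRing.unit.
Proof. by case: z => n; rewrite ?unitrV unitrX ?D_div. Qed.

Lemma exprz_neq0 (z : int) : pi ^ z != 0.
Proof. exact/unitr_neq0/unitr_exprz. Qed.

Lemma val_exprn n : v (pi ^+ n) = n.
Proof.
elim: n => [|n IHn]; first by rewrite expr0 val1.
by rewrite exprS valM ?val_pi ?IHn ?(exprz_neq0 n) //; lia.
Qed.

Lemma val_exprz (z : int) : v (pi ^ z) = z.
Proof.
case: z => n; first exact: val_exprn.
by rewrite /= valV ?val_exprn ?NegzE // (exprz_neq0 n.+1).
Qed.

Lemma inPow0 a : inPow v a 0.
Proof. by rewrite /inPow eqxx. Qed.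

Lemma inPowE a x : x != 0 -> inPow v a x = (a <= v x).
Proof. by rewrite /inPow => /negbTE ->. Qed.

Lemma inPow_exprz (z : int) : inPow v z (pi ^ z).
Proof. by rewrite inPowE ?exprz_neq0 // val_exprz. Qed.

Lemma inPow_1 : inPow v 0 1.
Proof. by rewrite inPowE ?oner_neq0 // val1. Qed.

Lemma inPowD a x y : inPow v a x -> inPow v a y -> inPow v a (x + y).
Proof.
have [-> | x0] := eqVneq x 0; first by rewrite add0r.
have [-> | y0] := eqVneq y 0; first by rewrite addr0.
have [-> | xy0] := eqVneq (x + y) 0; first by rewrite inPow0.
rewrite !inPowE // => ax ay; apply: le_trans (val_add x0 y0 xy0).
by rewrite le_min ax ay.
Qed.

Lemma inPow_sum (I : Type) (r : seq I) (F : I -> D) a :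
  (forall t, inPow v a (F t)) -> inPow v a (\sum_(t <- r) F t).
Proof.
by move=> Fa; apply: (big_ind (inPow v a)) => [|x y|t _]; [exact: inPow0 | exact: inPowD |].
Qed.

Lemma inPowMl a u x : u != 0 -> inPow v a x -> inPow v (v u + a) (u * x).
Proof.
move=> u0; have [-> _ | x0] := eqVneq x 0; first by rewrite mulr0 inPow0.
by rewrite !inPowE ?mulr_neq0 // valM // lerD2l.
Qed.

Lemma inPowMr a x u : u != 0 -> inPow v a x -> inPow v (a + v u) (x * u).
Proof.
move=> u0; have [-> _ | x0] := eqVneq x 0; first by rewrite mul0r inPow0.
by rewrite !inPowE ?mulr_neq0 // valM // lerD2r.
Qed.

Section MonomialOrder.
Variables (n : nat) (m : 'I_n.+1 -> 'I_n.+1 -> int) (l : 'I_n.+1 -> int).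
Local Notation R := (monomial_order v m).
Local Notation M := (diag_lattice v l).

Lemma monomial_orderP (A : 'M[D]_n.+1) :
  reflect (forall i j, inPow v (m i j) (A i j)) (A \in R).
Proof.
rewrite unfold_in; apply: (iffP forallP) => Am i; first by apply/forallP.
exact/forallP/Am.
Qed.

Lemma diag_latticeP (x : 'cV[D]_n.+1) :
  reflect (forall i, inPow v (l i) (x i 0)) (x \in M).
Proof. by rewrite unfold_in; apply: forallP. Qed.

Lemma monomial_order0 : 0 \in R.
Proof. by apply/monomial_orderP => i j; rewrite mxE inPow0. Qed.

Lemma monomial_orderD (A B : 'M[D]_n.+1) : A \in R -> B \in R -> A + B \in R.
Proof.
move=> /monomial_orderP AR /monomial_orderP BR.
by apply/monomial_orderP => i j; rewrite mxE inPowD.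
Qed.

Lemma elem_mx_monomial i j a : inPow v (m i j) a -> elem_mx i j a \in R.
Proof.
move=> ija; apply/monomial_orderP => r c; rewrite mxE.
by case: andP => [[/eqP -> /eqP ->] | _] //; rewrite inPow0.
Qed.

Lemma elem_col_lattice i a : inPow v (l i) a -> elem_col i a \in M.
Proof.
by move=> ia; apply/diag_latticeP => r; rewrite mxE; case: eqP => [-> | _] //; rewrite inPow0.
Qed.

Hypothesis m_diag : forall i, m i i = 0.

Lemma monomial_order1 : 1 \in R.
Proof.
apply/monomial_orderP => i j; rewrite mxE.
by case: eqP => [-> | _]; rewrite ?m_diag ?inPow_1 ?inPow0.
Qed.

Hypothesis M_submod : is_left_submodule R M.

Lemma lattice_exponent_le i j : l i <= m i j + l j.
Proof.
have [_ _ MR] := M_submod.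
have Eij := elem_mx_monomial (inPow_exprz (m i j)).
have := MR _ _ Eij (elem_col_lattice (inPow_exprz (l j))).
rewrite elem_mx_col => /diag_latticeP/(_ i); rewrite mxE eqxx.
by rewrite inPowE ?mulr_neq0 ?exprz_neq0 // valM ?exprz_neq0 // !val_exprz.
Qed.

Hypothesis m_first_row : forall i, m 0 i = 0.

Lemma coordinate_lower_bound k (s : 'cV[D]_n.+1 -> 'I_k -> 'M[D]_n.+1) :
  (forall x t, x \in M -> s x t \in R) ->
  (forall r x t, r \in R -> x \in M -> s (r *m x) t = r * s x t) ->
  forall t i j, inPow v (m i j + l 0 - l i) (s (elem_col 0 (pi ^ l 0)) t 0 j).
Proof.
move=> sR sZ t i j.
have l0_le : l 0 <= l i by have := lattice_exponent_le 0 i; rewrite m_first_row add0r.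
pose u := pi ^ l i / pi ^ l 0.
have piV0 z : (pi ^ z)^-1 != 0 by rewrite unitr_neq0 ?unitrV ?unitr_exprz.
have u0 : u != 0 by rewrite mulr_neq0 ?exprz_neq0.
have val_u : v u = l i - l 0 by rewrite valM ?valV ?exprz_neq0 ?val_exprz.
have uR : elem_mx 0 0 u \in R.
  by apply: elem_mx_monomial; rewrite inPowE // m_diag val_u subr_ge0.
have E0iR : elem_mx 0 i 1 \in R by apply: elem_mx_monomial; rewrite m_first_row inPow_1.
have xiM := elem_col_lattice (inPow_exprz (l i)).
have x0M := elem_col_lattice (inPow_exprz (l 0)).
have shift : elem_mx 0 i 1 *m elem_col i (pi ^ l i) = elem_mx 0 0 u *m elem_col 0 (pi ^ l 0).
  by rewrite !elem_mx_col mul1r divrK ?unitr_exprz.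
set a := s _ t 0 j.
have ua : inPow v (m i j) (u * a).
  have := congr1 (fun x => s x t 0 j) shift; rewrite /= !sZ // -!mulmxE !elem_mxM eqxx mul1r.
  by move=> <-; move/monomial_orderP: (sR _ t xiM); apply.
have uV0 : u^-1 != 0 by rewrite unitr_neq0 ?unitrV ?D_div.
have := inPowMl uV0 ua; rewrite mulKr ?D_div // valV // val_u.
by have -> : - (l i - l 0) + m i j = m i j + l 0 - l i by lia.
Qed.

Lemma projective_diag_lattice_column : is_projective R M -> exists j, forall i, l i = m i j + l j.
Proof.
move=> /(projective_dual_basis monomial_order0 monomial_order1 monomial_orderD).
move=> [k [s [z [sR sZ zM x_sum]]]].
pose x0 : 'cV[D]_n.+1 := elem_col 0 (pi ^ l 0).
have x0M : x0 \in M := elem_col_lattice (inPow_exprz (l 0)).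
have x00 : pi ^ l 0 = \sum_(t < k) \sum_(j < n.+1) s x0 t 0 j * z t j 0.
  have := congr1 (fun x : 'cV[D]_n.+1 => x 0 0) (x_sum _ x0M).
  rewrite /= summxE mxE eqxx => ->.
  by apply: eq_bigr => t _; rewrite mxE.
have : ~~ [forall t, [forall j, inPow v (l 0 + 1) (s x0 t 0 j * z t j 0)]].
  apply/negP => /forallP small.
  have := inPow_sum (index_enum _) (fun t => inPow_sum (index_enum _) (forallP (small t))).
  rewrite -x00 inPowE ?exprz_neq0 // val_exprz; lia.
move=> /forallPn [t /forallPn [j]].
set a := s x0 t 0 j; set c := z t j 0.
have [-> | a0] := eqVneq a 0; first by rewrite mul0r inPow0.
have [-> | c0] := eqVneq c 0; first by rewrite mulr0 inPow0.
rewrite inPowE ?mulr_neq0 // valM // => ac_lt.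
exists j => i.
have := coordinate_lower_bound sR sZ t i j; rewrite -/x0 -/a inPowE //.
have /diag_latticeP/(_ j) := zM t; rewrite -/c inPowE //.
have := lattice_exponent_le i j.
lia.
Qed.

Lemma column_lattice_projective j c : (forall i, l i = m i j + c) -> is_projective R M.
Proof.
move=> l_col; have piV0 : (pi ^ c)^-1 != 0 by rewrite unitr_neq0 ?unitrV ?unitr_exprz.
exists 1%N, (fun y => y 0 *m elem_col j (pi ^ c)), (fun x _ => x *m elem_row j (pi ^ c)^-1).
repeat split.
- move=> y yR; apply/diag_latticeP => i; rewrite mulmx_elem_col l_col.
  have /monomial_orderP/(_ i j) yij := yR 0.
  by have := inPowMr (exprz_neq0 c) yij; rewrite val_exprz.
- by move=> y z _ _; rewrite mulmxDl.
- by move=> r y _ _; rewrite -mulmxE mulmxA.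
- move=> x /diag_latticeP xM i; apply/monomial_orderP => r q.
  rewrite mul_col_elem_row; case: eqP => [-> | _]; last exact: inPow0.
  have -> : m r j = l r + v (pi ^ c)^-1 by rewrite valV ?exprz_neq0 // val_exprz l_col addrK.
  exact: inPowMr.
- by move=> x y _ _; rewrite mulmxDl.
- by move=> r x _ _; rewrite -mulmxE mulmxA.
- by move=> x _; rewrite -mulmxA elem_row_col mulVr ?unitr_exprz // mulmx1.
Qed.

End MonomialOrder.
End ValuedDivisionRing.

Unset Implicit Arguments.

Theorem theorem3p1 (k : fieldType) (D : unitRingType)
    (f : {rmorphism k -> D}) (v : D -> int)
    (HD : local_central_division_algebra f v)
    (n : nat) (m : 'I_n.+1 -> 'I_n.+1 -> int) (Hm : is_level m)
    (Hm1 : forall i, m ord0 i = 0)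
    (l : 'I_n.+1 -> int)
    (HM : is_left_submodule (monomial_order v m) (diag_lattice v l)) :
  is_projective (monomial_order v m) (diag_lattice v l) <->
  exists (j : 'I_n.+1) (c : int), forall i, l i = m i j + c.
Proof.
have [D_div [[valM val_add [pi [pi_neq0 val_pi]]] _]] := HD.
have [m_diag _] := Hm.
split => [proj | [j [c l_col]]].
  have [j l_col] :=
    projective_diag_lattice_column D_div valM val_add pi_neq0 val_pi m_diag HM Hm1 proj.
  by exists j, (l j).
exact: (column_lattice_projective D_div valM pi_neq0 val_pi l_col).
Qed.
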